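(* Let $V$ be a finitely generated $\mathrm{FS}^{\mathrm{op}}$-module over $\mathbb Z$. Then there exists an integer $e_V\ge 1$ such that for every $n\ge0$ the torsion subgroup of $V_n$ is annihilated by $e_V$ (i.e. its exponent divides $e_V$).
   Context: $\mathrm{FS}$ is the category whose objects are the sets $[n]=\{1,\dots,n\}$, $n\ge0$, and whose morphisms are all surjective maps. An $\mathrm{FS}^{\mathrm{op}}$-module over a ring $R$ is a functor $V:\mathrm{FS}^{\mathrm{op}}\to R\text{-Mod}$, with $V_n:=V([n])$; equivalently a family of $RS_n$-modules $V_n$ with compatible maps $V_b\to V_a$ for each surjection $[a]\to[b]$. $V$ is finitely generated if there is a finite set of elements of $\bigcup_n V_n$ not contained in any proper $\mathrm{FS}^{\mathrm{op}}$-submodule of $V$. (Known fact used: over a Noetherian ring, submodules of finitely generated $\mathrm{FS}^{\mathrm{op}}$-modules are finitely generated.) *)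

From Stdlib Require List.
From HB Require Import structures.
From mathcomp Require Import all_boot all_order all_algebra.
Set Implicit Arguments. Unset Strict Implicit. Unset Printing Implicit Defensive.
Import GRing.Theory.
Local Open Scope ring_scope.

(* Morphisms of FS: surjections [a] -> [b], with [n] modelled as 'I_n. *)
Definition surjb (a b : nat) (f : {ffun 'I_a -> 'I_b}) : bool :=
  [forall j : 'I_b, exists i : 'I_a, f i == j].

Definition Surj (a b : nat) := {f : {ffun 'I_a -> 'I_b} | surjb f}.

Definition surj_fun (a b : nat) (f : Surj a b) : 'I_a -> 'I_b := fun i => sval f i.
Coercion surj_fun : Surj >-> Funclass.

(* An FS^op-module over Z: abelian groups V_n with additive maps
   V(f) : V_b -> V_a for each surjection f : [a] -> [b], functorially
   (contravariantly). Modules over Z are abelian groups (zmodType). *)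
Record FSopModZ := {
  FSobj : nat -> zmodType;
  FSact : forall a b : nat, Surj a b -> FSobj b -> FSobj a;
  FSact_add : forall a b (f : Surj a b) (x y : FSobj b),
      FSact f (x + y) = FSact f x + FSact f y;
  FSact_id : forall a (f : Surj a a), (forall i, f i = i) ->
      forall x : FSobj a, FSact f x = x;
  FSact_comp : forall a b c (f : Surj a b) (g : Surj b c) (h : Surj a c),
      (forall i, h i = g (f i)) ->
      forall x : FSobj c, FSact h x = FSact f (FSact g x)
}.

Definition is_submodule (V : FSopModZ) (S : forall n, FSobj V n -> Prop) : Prop :=
  (forall n, S n 0) /\
  (forall n (x y : FSobj V n), S n x -> S n y -> S n (x - y)) /\
  (forall a b (f : Surj a b) (x : FSobj V b), S b x -> S a (@FSact V a b f x)).

Definition fin_gen (V : FSopModZ) : Prop :=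
  exists gens : seq {n : nat & FSobj V n},
    forall S, @is_submodule V S ->
      (forall g, List.In g gens -> S (projT1 g) (projT2 g)) ->
      forall n (x : FSobj V n), S n x.

Definition is_torsion (G : zmodType) (x : G) : Prop :=
  exists m : nat, (0 < m)%N /\ x *+ m = 0.

(* Let P be the free FS^op-module on the generators of V and pi : P -> V the
   evaluation.  The kernels K t of c |-> t! * pi c form an ascending chain of
   submodules of P, and P is Noetherian (Sam-Snowden): by Higman's lemma the
   basis monomials are well-quasi-ordered by divisibility along ordered
   surjections, and a submodule is determined by its ideals of leading
   coefficients for a monomial order compatible with those surjections; along
   a divisibility chain these ideals of Z increase, so they stabilise.  If the
   chain stops at t0, every torsion element of V is killed by t0!. *)

From HB Require Import structures.
From mathcomp Require Import all_boot all_order all_algebra.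
From Stdlib Require Import ClassicalEpsilon Classical.
From Stdlib Require List.
Set Implicit Arguments. Unset Strict Implicit. Unset Printing Implicit Defensive.

Definition asbool (P : Prop) : bool :=
  if excluded_middle_informative P then true else false.

Lemma asboolP (P : Prop) : reflect P (asbool P).
Proof. by rewrite /asbool; case: excluded_middle_informative => h; constructor. Qed.

Lemma increasing_enum (S : nat -> Prop) : (forall m, exists2 n, m <= n & S n) ->
  exists2 sg : nat -> nat, (forall t, S (sg t)) & (forall t, sg t < sg t.+1).
Proof.
move=> S_unbounded.
pose next m := epsilon (inhabits 0) (fun n => m <= n /\ S n).
have nextP m : m <= next m /\ S (next m).
  have [n mn Sn] := S_unbounded m.
  exact: (epsilon_spec (inhabits 0) (fun n => m <= n /\ S n) (ex_intro _ n (conj mn Sn))).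
pose sg t := iter t.+1 (fun x => next x.+1) 0.
exists sg => t; first by case: (nextP (iter t (fun x => next x.+1) 0).+1).
by case: (nextP (sg t).+1).
Qed.

Lemma infinite_pigeonhole (A : finType) (F : nat -> A) :
  exists a, forall m, exists2 t, m <= t & F t = a.
Proof.
apply: NNPP => no_a.
have bounded a : exists m, forall t, m <= t -> F t <> a.
  apply: NNPP => h; apply: no_a; exists a => m; apply: NNPP => h2; apply: h.
  by exists m => t mt Fta; apply: h2; exists t.
pose bnd a := epsilon (inhabits 0) (fun m => forall t, m <= t -> F t <> a).
have bndP a := epsilon_spec (inhabits 0) _ (bounded a).
pose B := \max_a bnd a.
exact: (bndP (F B) B (leq_bigmax (F := bnd) (F B)) erefl).
Qed.

Definition wqo (T : Type) (R : T -> T -> Prop) :=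
  forall X : nat -> T, exists i j, i < j /\ R (X i) (X j).

Lemma wqo_chain (T : Type) (R : T -> T -> Prop) : wqo R -> forall X : nat -> T,
  exists tau : nat -> nat, forall s, tau s < tau s.+1 /\ R (X (tau s)) (X (tau s.+1)).
Proof.
move=> wqoR X; pose good i := exists2 j, i < j & R (X i) (X j).
have [m good_m] : exists m, forall i, m <= i -> good i.
  apply: NNPP => no_m.
  have [sg bad_sg sg_incr] : exists2 sg : nat -> nat,
      (forall t, ~ good (sg t)) & (forall t, sg t < sg t.+1).
    apply: (@increasing_enum (fun i => ~ good i)) => m; apply: NNPP => h.
    by apply: no_m; exists m => i mi; apply: NNPP => gi; apply: h; exists i.
  have [i [j [ij Rij]]] := wqoR (X \o sg).
  by apply: (bad_sg i); exists (sg j) => //; apply: (homo_ltn ltn_trans sg_incr).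
pose next i := epsilon (inhabits 0) (fun j => i < j /\ R (X i) (X j)).
have nextP i : m <= i -> i < next i /\ R (X i) (X (next i)).
  move=> /good_m [j ij Rij].
  exact: (epsilon_spec (inhabits 0) (fun j => i < j /\ R (X i) (X j)) (ex_intro _ j (conj ij Rij))).
have iter_ge s : m <= iter s next m.
  by elim: s => //= s IH; apply: leq_trans IH (ltnW (proj1 (nextP _ IH))).
by exists (fun t => iter t next m) => s; apply: nextP.
Qed.

Section Higman.
Variable A : finType.

Definition bad (W : nat -> seq A) := forall i j, i < j -> ~~ subseq (W i) (W j).

Definition agrees (W : nat -> seq A) (p : seq (seq A)) :=
  forall i, i < size p -> W i = nth [::] p i.

Definition bad_prefix (p : seq (seq A)) := exists2 W, bad W & agrees W p.

Lemma agrees_rcons W p w : agrees W p -> W (size p) = w -> agrees W (rcons p w).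
Proof.
move=> Wp Ww i; rewrite size_rcons ltnS nth_rcons leq_eqVlt => /orP[/eqP->|ip].
  by rewrite ltnn eqxx.
by rewrite ip Wp.
Qed.

Definition min_bad_ext (p : seq (seq A)) (w : seq A) :=
  bad_prefix (rcons p w) /\ forall w', bad_prefix (rcons p w') -> size w <= size w'.

Definition min_bad_next (p : seq (seq A)) : seq A :=
  epsilon (inhabits [::]) (min_bad_ext p).

Lemma min_bad_nextP p : bad_prefix p -> min_bad_ext p (min_bad_next p).
Proof.
move=> [W bad_W Wp]; apply: (epsilon_spec _ (min_bad_ext p)).
have ex_size : exists n, asbool (exists2 w, size w = n & bad_prefix (rcons p w)).
  exists (size (W (size p))); apply/asboolP; exists (W (size p)) => //.
  by exists W => //; apply: agrees_rcons.
case: (ex_minnP ex_size) => n /asboolP [w <- pw] n_min.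
by exists w; split => // w' pw'; apply: n_min; apply/asboolP; exists w'.
Qed.

Fixpoint min_bad_prefix (t : nat) : seq (seq A) :=
  if t is t'.+1 then rcons (min_bad_prefix t') (min_bad_next (min_bad_prefix t'))
  else [::].

Definition min_bad (t : nat) : seq A := min_bad_next (min_bad_prefix t).

Lemma size_min_bad_prefix t : size (min_bad_prefix t) = t.
Proof. by elim: t => //= t IH; rewrite size_rcons IH. Qed.

Lemma nth_min_bad_prefix t i : i < t -> nth [::] (min_bad_prefix t) i = min_bad i.
Proof.
elim: t => // t IH; rewrite ltnS leq_eqVlt => /orP[/eqP->|it] /=;
  rewrite nth_rcons size_min_bad_prefix ?ltnn ?eqxx //.
by rewrite (leq_trans it) // IH.
Qed.

Variable W0 : nat -> seq A.
Hypothesis bad_W0 : bad W0.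

Lemma bad_prefix_min_bad t : bad_prefix (min_bad_prefix t).
Proof. by elim: t => [|t IH]; [exists W0 | case: (min_bad_nextP IH)]. Qed.

Lemma min_bad_bad : bad min_bad.
Proof.
move=> i j ij; have [W bad_W Wp] := bad_prefix_min_bad j.+1.
have Wmin k : k < j.+1 -> W k = min_bad k.
  by move=> kj; rewrite Wp ?size_min_bad_prefix // nth_min_bad_prefix.
by rewrite -!Wmin //; [apply: bad_W | apply: ltn_trans ij _].
Qed.

Lemma min_bad_minimal t W : bad W -> (forall i, i < t -> W i = min_bad i) ->
  size (min_bad t) <= size (W t).
Proof.
move=> bad_W Wmin; apply: (proj2 (min_bad_nextP (bad_prefix_min_bad t))).
exists W => //; apply: agrees_rcons; rewrite ?size_min_bad_prefix //.
by move=> i; rewrite size_min_bad_prefix => it; rewrite nth_min_bad_prefix // Wmin.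
Qed.

Lemma min_bad_neq_nil t : min_bad t != [::].
Proof. by apply/eqP => Mt; have := min_bad_bad (ltnSn t); rewrite Mt sub0seq. Qed.

End Higman.

(* Nash-Williams' minimal bad sequence argument: dropping the common first
   letter along a subsequence of a bad sequence keeps it bad. *)
Lemma bad_behead_shift (A : finType) (M : nat -> seq A) (sg : nat -> nat) a :
  bad M -> (forall t, M t != [::]) -> (forall t, sg t < sg t.+1) ->
  (forall t, ohead (M (sg t)) = a) ->
  bad (fun t => if t < sg 0 then M t else behead (M (sg (t - sg 0)))).
Proof.
move=> bad_M M_nil sg_incr sg_a.
have sg_lt := homo_ltn ltn_trans sg_incr.
have sg_le := homo_leq leqnn leq_trans (fun t => ltnW (sg_incr t)).
have behead_sub (s : seq A) : subseq (behead s) s by case: s => //= x s; apply: subseq_cons.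
move=> i j ij; case: ltnP => i0; case: ltnP => j0.
- exact: bad_M.
- apply: contra (bad_M i (sg (j - sg 0)) _) => [sub|]; first exact: subseq_trans sub _.
  exact: leq_trans i0 (sg_le _ _ (leq0n _)).
- by have := ltn_trans (leq_ltn_trans i0 ij) j0; rewrite ltnn.
- have := bad_M _ _ (sg_lt (i - sg 0) (j - sg 0) (ltn_sub2r (leq_ltn_trans i0 ij) ij)).
  move: (M_nil (sg (i - sg 0))) (sg_a (i - sg 0)) (sg_a (j - sg 0)).
  case: (M (sg (i - sg 0))) => // x u _; case: (M (sg (j - sg 0))) => [<- //|y v].
  by move=> /= <- [->]; rewrite eqxx; apply: contra.
Qed.

Theorem higman (A : finType) : wqo (@subseq A).
Proof.
move=> W0; apply: NNPP => good_W0.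
have bad_W0 : bad W0 by move=> i j ij; apply/negP => sub; apply: good_W0; exists i, j.
pose M := @min_bad A.
have [a heads] := infinite_pigeonhole (fun t => ohead (M t)).
have [sg sg_a sg_incr] := increasing_enum heads.
pose W t := if t < sg 0 then M t else behead (M (sg (t - sg 0))).
have bad_W : bad W.
  exact: bad_behead_shift (min_bad_bad bad_W0) (min_bad_neq_nil bad_W0) sg_incr sg_a.
have W_agrees i : i < sg 0 -> W i = M i by rewrite /W => ->.
have := min_bad_minimal bad_W0 bad_W W_agrees; rewrite /W ltnn subnn.
move: (min_bad_neq_nil bad_W0 (sg 0)); rewrite /M.
by case: (min_bad A (sg 0)) => //= x u _; rewrite ltnn.
Qed.

Lemma subseq_index (T : eqType) (x0 : T) (s t : seq T) : subseq s t ->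
  exists io : nat -> nat,
    (forall j, j < size s -> io j < size t /\ nth x0 s j = nth x0 t (io j)) /\
    (forall j j', j < j' -> j' < size s -> io j < io j').
Proof.
elim: t s => [|y t IH] [|x s] //=; try by exists id.
case: eqP => [->|_] sub; have [io [io_nth io_incr]] := IH _ sub.
- exists (fun j => if j is j'.+1 then (io j').+1 else 0); split.
    by case=> [|j] //= /io_nth.
  by case=> [|j] [|j'] //=; rewrite !ltnS; apply: io_incr.
- exists (fun j => (io j).+1); split; first by move=> j /io_nth.
  by move=> j j' jj' j's; rewrite ltnS; apply: io_incr.
Qed.

Lemma surjbP a b (f : {ffun 'I_a -> 'I_b}) :
  reflect (forall j, exists i, f i = j) (surjb f).
Proof.
apply: (iffP forallP) => f_onto j; first by have /existsP[i /eqP] := f_onto j; exists i.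
by have [i fi] := f_onto j; apply/existsP; exists i; apply/eqP.
Qed.

Lemma Surj_onto a b (f : Surj a b) j : exists i, f i = j.
Proof. exact: (elimT (surjbP _) (svalP f) j). Qed.

Lemma Surj_ext a b (f g : Surj a b) : f =1 g -> f = g.
Proof. by move=> fg; apply: val_inj; apply/ffunP. Qed.

Lemma Surj_comp_subproof a b c (h : Surj a b) (f : Surj b c) :
  surjb [ffun i => f (h i)].
Proof.
apply/surjbP => j; have [x <-] := Surj_onto f j; have [i <-] := Surj_onto h x.
by exists i; rewrite ffunE.
Qed.

Definition Surj_comp a b c (h : Surj a b) (f : Surj b c) : Surj a c :=
  exist _ [ffun i => f (h i)] (Surj_comp_subproof h f).

Lemma Surj_compE a b c (h : Surj a b) (f : Surj b c) i : Surj_comp h f i = f (h i).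
Proof. exact: ffunE. Qed.

Lemma Surj_id_subproof n : surjb [ffun i : 'I_n => i].
Proof. by apply/surjbP => j; exists j; rewrite ffunE. Qed.

Definition Surj_id n : Surj n n := exist _ [ffun i => i] (Surj_id_subproof n).

Lemma Surj_idE n i : Surj_id n i = i.
Proof. exact: ffunE. Qed.

Definition ordered_surj a b (h : Surj a b) : Prop :=
  forall j : 'I_b, exists q : 'I_a, h q = j /\ forall p : 'I_a, p < q -> h p < j.

Definition first_occ n d (f : Surj n d) (p : 'I_n) : bool :=
  [forall q : 'I_n, (q < p) ==> (f q != f p)].

Lemma ordered_factor n m d (f : Surj n d) (g : Surj m d) (io : 'I_n -> 'I_m) :
  (forall j j' : 'I_n, j < j' -> io j < io j') -> (forall j, f j = g (io j)) ->
  (forall j, first_occ f j -> first_occ g (io j)) ->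
  exists2 h : Surj m n, ordered_surj h & forall p, g p = f (h p).
Proof.
move=> io_incr fg io_first.
have io_leq (j j' : 'I_n) : io j <= io j' -> j <= j'.
  by apply: contraTT; rewrite -!ltnNge; apply: io_incr.
pose P (p : 'I_m) (j : 'I_n) := (io j <= p) && (f j == g p).
have exP p : exists j, P p j.
  have [j0 fj0] := Surj_onto f (g p).
  have [j /eqP fj j_min] :=
    @arg_minnP _ j0 (fun j : 'I_n => f j == g p) val (introT eqP fj0).
  exists j; rewrite /P fj eqxx andbT leqNgt; apply/negP => p_io.
  have /io_first/forallP/(_ p) : first_occ f j.
    apply/forallP => q; apply/implyP => qj; apply: contraTneq qj => fqj.
    by rewrite -leqNgt; apply: j_min; rewrite fqj fj.
  by rewrite p_io -fg fj eqxx.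
pose hf p := [arg max_(j > xchoose (exP p) | P p j) val j].
have hfP p : P p (hf p) /\ forall j, P p j -> j <= hf p.
  by rewrite /hf; case: arg_maxnP => [|j Pj j_max]; [exact: xchooseP | split].
have hf_io j : hf (io j) = j.
  have [/andP[io_hf _] hf_max] := hfP (io j).
  by apply/val_inj/eqP; rewrite eqn_leq io_leq //= hf_max // /P leqnn fg eqxx.
have hf_surj : surjb [ffun p => hf p].
  by apply/surjbP => j; exists (io j); rewrite ffunE hf_io.
exists (exist _ [ffun p => hf p] hf_surj) => [j|p]; last first.
  by have [/andP[_ /eqP <-] _] := hfP p; rewrite /surj_fun /= ffunE.
exists (io j); rewrite /surj_fun /= !ffunE hf_io; split => // p p_io.
have [/andP[io_hf _] _] := hfP p; rewrite ffunE ltnNge; apply/negP => j_hf.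
have : io j <= io (hf p).
  by move: j_hf; rewrite leq_eqVlt => /orP[/eqP/val_inj-> // | /io_incr/ltnW].
by move=> /leq_trans/(_ io_hf); rewrite leqNgt p_io.
Qed.

Section Monomials.
Variables (k : nat) (deg : 'I_k -> nat).

(* The Z-basis in degree n of the free module on generators of degrees [deg]:
   a generator i together with a surjection [n] -> [deg i]. *)
Definition Mon n := {i : 'I_k & Surj n (deg i)}.

Definition mon_pull a b (h : Surj a b) (x : Mon b) : Mon a :=
  Tagged (fun i => Surj a (deg i)) (Surj_comp h (tagged x)).

Definition mon_dvd (u v : {n : nat & Mon n}) : Prop :=
  exists2 h : Surj (projT1 v) (projT1 u), ordered_surj h & projT2 v = mon_pull h (projT2 u).

(* A monomial is encoded by its generator followed by one letter per
   position: the value there and whether it is the first occurrence of that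
   value.  A subword embedding of codes is then a divisibility, by
   [ordered_factor]. *)
Definition mon_alphabet := ('I_k + ({i : 'I_k & 'I_(deg i)} * bool))%type.

Definition mon_letter n (x : Mon n) (p : 'I_n) : mon_alphabet :=
  inr (Tagged (fun i => 'I_(deg i)) (tagged x p), first_occ (tagged x) p).

Definition mon_word n (x : Mon n) : seq mon_alphabet :=
  inl (tag x) :: [seq mon_letter x p | p <- enum 'I_n].

Lemma nth_mon_letters n (x : Mon n) (p : 'I_n) d :
  nth d [seq mon_letter x p | p <- enum 'I_n] p = mon_letter x p.
Proof. by rewrite (nth_map p) ?size_enum_ord // nth_ord_enum. Qed.

Lemma size_mon_letters n (x : Mon n) : size [seq mon_letter x p | p <- enum 'I_n] = n.
Proof. by rewrite size_map size_enum_ord. Qed.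

Lemma subseq_mon_word n m (x : Mon n) (y : Mon m) :
  subseq (mon_word x) (mon_word y) -> mon_dvd (Tagged Mon x) (Tagged Mon y).
Proof.
case: x => i f; case: y => i' g; rewrite /mon_word /=.
case: eqP => [[ii']|_] sub; last first.
  by have /mapP[] := mem_subseq sub (mem_head _ _).
subst i'.
have [io [io_nth io_incr]] := subseq_index (inl i) sub.
rewrite !size_mon_letters in io_nth io_incr.
pose io' (j : 'I_n) : 'I_m := Ordinal (proj1 (io_nth j (ltn_ord j))).
have mon_letter_io j : mon_letter (Tagged (fun i => Surj n (deg i)) f) j =
    mon_letter (Tagged (fun i => Surj m (deg i)) g) (io' j).
  have := proj2 (io_nth j (ltn_ord j)).
  by have -> : io j = io' j by []; rewrite !nth_mon_letters.
have [h h_ord gfh] : exists2 h : Surj m n, ordered_surj h & forall p, g p = f (h p).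
  apply: (ordered_factor (io := io')) => [j j' /io_incr -> //|j|j].
    by apply: val_inj; have := congr1 (fun u : mon_alphabet =>
      if u is inr (t, _) then val (tagged t) else 0) (mon_letter_io j).
  by have := congr1 (fun u : mon_alphabet => if u is inr (_, b) then b else false) (mon_letter_io j)
    => /= ->.
by exists h => //=; congr (existT _ i _); apply: Surj_ext => p; rewrite Surj_compE gfh.
Qed.

Lemma mon_dvd_wqo : wqo mon_dvd.
Proof.
move=> X; have [i [j [ij sub]]] := higman (fun t => mon_word (projT2 (X t))).
by exists i, j; split => //; move: sub; case: (X i) (X j) => [n x] [m y] /subseq_mon_word.
Qed.

Definition mon_val n (x : Mon n) (p : 'I_n) : nat := tagged x p.

Definition mon_lt n (x y : Mon n) : bool :=
  (tag x < tag y) || (tag x == tag y) && [exists j : 'I_n,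
    [forall p : 'I_n, (p < j) ==> (mon_val x p == mon_val y p)] &&
    (mon_val x j < mon_val y j)].

Lemma mon_ext n (x y : Mon n) : tag x = tag y -> mon_val x =1 mon_val y -> x = y.
Proof.
case: x => i f; case: y => i' g /= ii' fg; subst i'.
by congr (existT _ i _); apply: Surj_ext => p; apply: val_inj; apply: fg.
Qed.

Lemma mon_ltxx n (x : Mon n) : ~~ mon_lt x x.
Proof. by rewrite /mon_lt ltnn eqxx /=; apply/existsP => -[j /andP[_]]; rewrite ltnn. Qed.

Lemma mon_lt_trans n (x y z : Mon n) : mon_lt x y -> mon_lt y z -> mon_lt x z.
Proof.
rewrite /mon_lt => /orP[xy|/andP[/eqP exy /existsP[j1 /andP[/forallP eq1 lt1]]]]
  /orP[yz|/andP[/eqP eyz /existsP[j2 /andP[/forallP eq2 lt2]]]].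
- by rewrite (ltn_trans xy yz).
- by rewrite -eyz xy.
- by rewrite exy yz.
apply/orP; right; rewrite exy eyz eqxx /=; apply/existsP.
case: (ltngtP j1 j2) => [j12|j21|/val_inj j12]; [exists j1 | exists j2 | exists j1];
  apply/andP; split; try (apply/forallP => p; apply/implyP => pj).
- move/implyP: (eq1 p) => /(_ pj) /eqP ->.
  by move/implyP: (eq2 p) => /(_ (ltn_trans pj j12)).
- by move/implyP: (eq2 j1) => /(_ j12) /eqP <-.
- move/implyP: (eq1 p) => /(_ (ltn_trans pj j21)) /eqP ->.
  by move/implyP: (eq2 p) => /(_ pj).
- by move/implyP: (eq1 j2) => /(_ j21) /eqP ->.
- move/implyP: (eq1 p) => /(_ pj) /eqP ->.
  by move/implyP: (eq2 p); rewrite -j12 => /(_ pj).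
- by rewrite j12 in lt1 *; apply: ltn_trans lt1 lt2.
Qed.

Lemma mon_lt_total n (x y : Mon n) : x != y -> mon_lt x y || mon_lt y x.
Proof.
move=> xy; rewrite /mon_lt; case: (ltngtP (tag x) (tag y)) => //= [_|/val_inj ext].
  by rewrite orbT.
rewrite ext eqxx /=.
have [j xjy] : exists j, mon_val x j != mon_val y j.
  apply/existsP; apply: contraR xy => /existsPn xy; apply/eqP/mon_ext => // p.
  by apply/eqP; move: (xy p); rewrite negbK.
have [j0 xj0y j0_min] := @arg_minnP _ j (fun j => mon_val x j != mon_val y j) val xjy.
have agree (u v : Mon n) : (u, v) = (x, y) \/ (u, v) = (y, x) ->
    [forall p : 'I_n, (p < j0) ==> (mon_val u p == mon_val v p)].
  move=> uv; apply/forallP => p; apply/implyP => pj0.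
  have : mon_val x p == mon_val y p.
    by apply: contraTT pj0 => /j0_min; rewrite -leqNgt.
  by case: uv => -[-> ->] //; rewrite eq_sym.
case: (ltngtP (mon_val x j0) (mon_val y j0)) => [lt|lt|eq].
- by apply/orP; left; apply/existsP; exists j0; rewrite agree ?lt //; left.
- by apply/orP; right; apply/existsP; exists j0; rewrite agree ?lt //; right.
- by rewrite eq eqxx in xj0y.
Qed.

Lemma mon_val_pull a b (h : Surj a b) (x : Mon b) p :
  mon_val (mon_pull h x) p = mon_val x (h p).
Proof. by rewrite /mon_val /= Surj_compE. Qed.

Lemma mon_lt_pull a b (h : Surj a b) (x y : Mon b) :
  ordered_surj h -> mon_lt x y -> mon_lt (mon_pull h x) (mon_pull h y).
Proof.
move=> h_ord; rewrite /mon_lt /= => /orP[-> //|/andP[-> /existsP[j /andP[/forallP eqj ltj]]]].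
apply/orP; right; apply/existsP; have [q [hq h_below]] := h_ord j.
exists q; rewrite !mon_val_pull hq ltj andbT; apply/forallP => p; apply/implyP => pq.
by rewrite !mon_val_pull; move/implyP: (eqj (h p)); apply; apply: h_below.
Qed.

Lemma mon_pull_inj a b (h : Surj a b) : injective (mon_pull h).
Proof.
move=> x y xy; apply: mon_ext; first by have := congr1 (@tag _ _) xy.
by move=> p; have [q <-] := Surj_onto h p; rewrite -!mon_val_pull xy.
Qed.

End Monomials.

Import GRing.Theory.
Local Open Scope ring_scope.

Definition subgroup_pred (G : zmodType) (S : G -> Prop) :=
  S 0 /\ forall x y, S x -> S y -> S (x - y).

Section SubgroupPred.
Variables (G : zmodType) (S : G -> Prop).
Hypothesis S_subgroup : subgroup_pred S.

Lemma subgroup_predN x : S x -> S (- x).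
Proof. by case: S_subgroup => S0 SB Sx; rewrite -sub0r; apply: SB. Qed.

Lemma subgroup_predD x y : S x -> S y -> S (x + y).
Proof.
by case: S_subgroup => _ SB Sx /subgroup_predN Sy; rewrite -[y]opprK; apply: SB.
Qed.

Lemma subgroup_predMn x m : S x -> S (x *+ m).
Proof.
case: S_subgroup => S0 _ Sx.
by elim: m => [|m IH]; rewrite ?mulr0n // mulrS; apply: subgroup_predD.
Qed.

Lemma subgroup_predMz x z : S x -> S (x *~ z).
Proof.
by case: z => m Sx; rewrite ?NegzE ?mulrNz; [|apply: subgroup_predN];
  apply: subgroup_predMn.
Qed.

End SubgroupPred.

Section LeadingIdeals.
Variables (k : nat) (deg : 'I_k -> nat).
Local Notation Mon := (Mon deg).

Definition coef_pull a b (h : Surj a b) (c : {ffun Mon b -> int}) : {ffun Mon a -> int} :=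
  [ffun y => \sum_(x | mon_pull h x == y) c x].

Definition lead_ideal n (S : {ffun Mon n -> int} -> Prop) (x : Mon n) (z : int) :=
  exists c, S c /\ c x = z /\ forall y, mon_lt x y -> c y = 0.

Lemma exists_max_support n (c : {ffun Mon n -> int}) : c != 0 ->
  exists x, c x != 0 /\ forall y, mon_lt x y -> c y = 0.
Proof.
move=> c_neq0; have [x0 cx0] : exists x0, c x0 != 0.
  by apply/existsP; apply: contraNT c_neq0 => /existsPn c0; apply/eqP/ffunP => y;
    rewrite ffunE; apply/eqP; rewrite -[_ == _]negbK c0.
pose above x := #|[pred y | (c y != 0) && mon_lt x y]|.
have [x cx x_min] := @arg_minnP _ x0 (fun x => c x != 0) above cx0.
exists x; split => // y xy; apply/eqP; apply: contraT => cy.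
have : (above y < above x)%N.
  apply: proper_card; apply/properP; split.
    by apply/subsetP => z; rewrite !inE => /andP[-> /(mon_lt_trans xy)].
  by exists y; rewrite inE ?cy ?xy // (negbTE (mon_ltxx y)) andbF.
by rewrite ltnNge x_min.
Qed.

Definition down_size n (c : {ffun Mon n -> int}) :=
  #|[pred y | [exists z, (c z != 0) && ((y == z) || mon_lt y z)]]|.

Lemma down_size_cancel n (c b : {ffun Mon n -> int}) (x : Mon n) :
  c x != 0 -> (forall y, mon_lt x y -> c y = 0) ->
  b x = c x -> (forall y, mon_lt x y -> b y = 0) ->
  (down_size (c - b)%R < down_size c)%N.
Proof.
move=> cx c_above bx b_above.
apply: proper_card; apply/properP; split.
  apply/subsetP => y; rewrite !inE => /existsP[z /andP[]]; rewrite !ffunE => cbz yz.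
  have [cz|/negPn/eqP cz] := boolP (c z != 0); first by apply/existsP; exists z; rewrite cz.
  apply/existsP; exists x; rewrite cx /=.
  have zx : (z == x) || mon_lt z x.
    have [//|zx] := eqVneq z x; case/orP: (mon_lt_total zx) => // xz.
    by move: cbz; rewrite cz b_above // subrr eqxx.
  case/orP: yz => [/eqP-> //|yz]; case/orP: zx => [/eqP <-|zx]; first by rewrite yz orbT.
  by rewrite (mon_lt_trans yz zx) orbT.
exists x; first by rewrite inE; apply/existsP; exists x; rewrite cx eqxx.
rewrite inE; apply/negP => /existsP[z /andP[]]; rewrite !ffunE => cbz /orP[/eqP zx|xz].
  by rewrite -zx bx subrr eqxx in cbz.
by rewrite c_above ?b_above // subrr eqxx in cbz.
Qed.

Lemma lead_ideal_eq n (S S' : {ffun Mon n -> int} -> Prop) :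
  subgroup_pred S -> subgroup_pred S' -> (forall c, S c -> S' c) ->
  (forall x z, lead_ideal S' x z -> lead_ideal S x z) -> forall c, S' c -> S c.
Proof.
move=> S_subgroup [_ S'B] SS' lead_S'S c.
elim: {c}(down_size c).+1 {-2}c (ltnSn (down_size c)) => // N IH c c_size S'c.
have [->|c_neq0] := eqVneq c 0; first exact: S_subgroup.1.
have [x [cx c_above]] := exists_max_support c_neq0.
have [b [Sb [bx b_above]]] : lead_ideal S x (c x) by apply: lead_S'S; exists c.
have S_cb : S (c - b).
  apply: IH; last by apply: S'B => //; apply: SS'.
  exact: leq_trans (down_size_cancel cx c_above bx b_above) c_size.
by rewrite -[c](subrK b); apply: subgroup_predD.
Qed.

Lemma lead_ideal_pull a b (h : Surj a b) (Sb : {ffun Mon b -> int} -> Prop)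
    (Sa : {ffun Mon a -> int} -> Prop) (x : Mon b) (z : int) :
  ordered_surj h -> (forall c, Sb c -> Sa (coef_pull h c)) ->
  lead_ideal Sb x z -> lead_ideal Sa (mon_pull h x) z.
Proof.
move=> h_ord SbSa [c [Sbc [cx c_above]]]; exists (coef_pull h c); split; first exact: SbSa.
split.
  rewrite ffunE (eq_bigl (pred1 x)) ?big_pred1_eq // => y.
  by apply/eqP/eqP => [/mon_pull_inj|->].
move=> y xy; rewrite ffunE big1 // => x' /eqP hx'; apply/eqP; apply: contraT => cx'.
have [ex'|x'x] := eqVneq x' x; first by rewrite -hx' ex' (negbTE (mon_ltxx _)) in xy.
case/orP: (mon_lt_total x'x) => [x'x_lt|xx']; last by rewrite c_above ?eqxx in cx'.
rewrite -hx' in xy.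
by have := mon_lt_trans xy (mon_lt_pull h_ord x'x_lt); rewrite (negbTE (mon_ltxx _)).
Qed.

Lemma lead_ideal_subgroup n (S : {ffun Mon n -> int} -> Prop) (x : Mon n) :
  subgroup_pred S -> subgroup_pred (lead_ideal S x).
Proof.
move=> [S0 SB]; split; first by exists 0; split => //; split => [|y _]; rewrite ffunE.
move=> z z' [c [Sc [cx c_above]]] [c' [Sc' [cx' c'_above]]].
exists (c - c'); split; first exact: SB.
by split => [|y xy]; rewrite !ffunE ?cx ?cx' // c_above ?c'_above ?subrr.
Qed.

Lemma lead_ideal_sub n (S S' : {ffun Mon n -> int} -> Prop) x z :
  (forall c, S c -> S' c) -> lead_ideal S x z -> lead_ideal S' x z.
Proof. by move=> SS' [c [/SS' S'c cx]]; exists c. Qed.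

Lemma lead_ideal_strict n (S S' : {ffun Mon n -> int} -> Prop) :
  subgroup_pred S -> subgroup_pred S' -> (forall c, S c -> S' c) ->
  (exists c, S' c /\ ~ S c) -> exists x z, lead_ideal S' x z /\ ~ lead_ideal S x z.
Proof.
move=> S_subgroup S'_subgroup SS' [c [S'c Snc]]; apply: NNPP => same_lead.
apply/Snc/(lead_ideal_eq S_subgroup S'_subgroup SS') => // x z S'xz.
by apply: NNPP => Snxz; apply: same_lead; exists x, z.
Qed.

End LeadingIdeals.

Lemma no_strict_chain_int (J : nat -> int -> Prop) :
  (forall s, subgroup_pred (J s)) -> (forall s z, J s z -> J s.+1 z) ->
  ~ (forall s, exists2 z, J s.+1 z & ~ J s z).
Proof.
move=> J_subgroup J_step J_strict.
have J_mono s s' z : (s <= s')%N -> J s z -> J s' z.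
  by move=> /subnK <-; elim: (s' - s)%N => // d IH /IH /J_step.
have [b Jb Jnb] := J_strict 0%N.
have b_neq0 : b != 0 by apply: contra_notN Jnb => /eqP->; apply: (J_subgroup 0%N).1.
have J_mulb s q : (0 < s)%N -> J s (q * b).
  by move=> s_gt0; rewrite mulrC -mulrzz; apply: subgroup_predMz;
    [apply: J_subgroup | apply: J_mono Jb].
(* For s >= 1, J s contains b Z, so it is determined by its residues mod b. *)
pose residues s := #|[pred r : 'I_`|b|%N | asbool (J s (r%:Z))]|.
have residues_incr s : (0 < s)%N -> (residues s < residues s.+1)%N.
  move=> s_gt0; have [a Ja Jna] := J_strict s.
  have r_lt : (`|(a %% b)%Z|%N < `|b|%N)%N by rewrite -ltz_nat gez0_abs ?modz_ge0 ?ltz_mod.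
  apply: proper_card; apply/properP; split.
    by apply/subsetP => r; rewrite !inE => /asboolP/J_step/asboolP.
  exists (Ordinal r_lt); rewrite inE /= gez0_abs ?modz_ge0 //; apply/asboolP.
    have -> : (a %% b)%Z = a - (a %/ b)%Z * b.
      by rewrite {2}(divz_eq a b) addrAC subrr add0r.
    by apply: (J_subgroup _).2 => //; apply: J_mulb.
  move=> Jr; apply: Jna; rewrite (divz_eq a b) addrC.
  by apply: subgroup_predD => //; apply: J_mulb.
have residues_ge s : (s <= residues s.+1)%N.
  by elim: s => // s IH; apply: leq_ltn_trans IH (residues_incr _ _).
by have := leq_trans (residues_ge `|b|.+1) (max_card _); rewrite card_ord ltnn.
Qed.

Section CoefficientChains.
Variables (k : nat) (deg : 'I_k -> nat).
Local Notation Mon := (Mon deg).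

Definition coef_submod (S : forall n, {ffun Mon n -> int} -> Prop) :=
  (forall n, subgroup_pred (S n)) /\
  (forall a b (h : Surj a b) c, S b c -> S a (coef_pull h c)).

Variable K : nat -> forall n, {ffun Mon n -> int} -> Prop.
Hypothesis K_submod : forall t, coef_submod (K t).
Hypothesis K_step : forall t n (c : {ffun Mon n -> int}), K t c -> K t.+1 c.

Lemma chain_mono t t' n (c : {ffun Mon n -> int}) : (t <= t')%N -> K t c -> K t' c.
Proof. by move=> /subnK <-; elim: (t' - t)%N => // d IH /IH /K_step. Qed.

Lemma unstable_lead_ideals : ~ (exists t0, forall t n (c : {ffun Mon n -> int}), K t c -> K t0 c) ->
  exists (kt : nat -> nat) (X : nat -> {n : nat & Mon n}) (z : nat -> int),
    forall s, (kt s <= kt s.+1)%N /\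
      lead_ideal (@K (kt s.+1) _) (projT2 (X s)) (z s) /\
      ~ lead_ideal (@K (kt s) _) (projT2 (X s)) (z s).
Proof.
move=> unstable.
pose jumps t0 (p : nat * ({n : nat & Mon n} * int)) := (t0 <= p.1)%N /\
  lead_ideal (@K p.1 _) (projT2 p.2.1) p.2.2 /\ ~ lead_ideal (@K t0 _) (projT2 p.2.1) p.2.2.
have jump_ex t0 : exists p, jumps t0 p.
  have [t [n [c [Ktc Kt0c]]]] : exists t n (c : {ffun Mon n -> int}), K t c /\ ~ K t0 c.
    apply: NNPP => stable; apply: unstable; exists t0 => t n c Ktc.
    by apply: NNPP => Kt0c; apply: stable; exists t, n, c.
  have t0t : (t0 <= t)%N by rewrite leqNgt; apply/negP => /ltnW/chain_mono/(_ Ktc).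
  have ex_c : exists c', @K t n c' /\ ~ K t0 c' by exists c.
  have [x [z lead_xz]] :=
    lead_ideal_strict ((K_submod t0).1 n) ((K_submod t).1 n) (fun c' => chain_mono t0t) ex_c.
  by exists (t, (Tagged Mon x, z)).
pose jump t0 := proj1_sig (constructive_indefinite_description _ (jump_ex t0)).
have jumpP t0 : jumps t0 (jump t0) := proj2_sig (constructive_indefinite_description _ _).
pose kt s := iter s (fun t0 => (jump t0).1) 0%N.
exists kt, (fun s => (jump (kt s)).2.1), (fun s => (jump (kt s)).2.2) => s.
by case: (jumpP (kt s)).
Qed.

Lemma coef_chain_stationary :
  exists t0, forall t n (c : {ffun Mon n -> int}), K t c -> K t0 c.
Proof.
apply: NNPP => /unstable_lead_ideals [kt [X [z chain]]].
have kt_mono := homo_leq leqnn leq_trans (fun s => (chain s).1).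
have [tau tau_chain] := wqo_chain (@mon_dvd_wqo _ deg) X.
(* Along a divisibility chain the leading ideals of the K (kt s) increase. *)
pose J s w := lead_ideal (@K (kt (tau s).+1) _) (projT2 (X (tau s))) w.
have J_step s w : J s w -> lead_ideal (@K (kt (tau s.+1)) _) (projT2 (X (tau s.+1))) w.
  have [tau_lt [h h_ord ->]] := tau_chain s.
  move=> Jw; apply: (lead_ideal_pull h_ord (Sb := @K (kt (tau s.+1)) _)).
    exact: (K_submod _).2.
  by apply: lead_ideal_sub Jw => c; apply: chain_mono; apply: kt_mono.
apply: (@no_strict_chain_int J).
- by move=> s; apply: lead_ideal_subgroup; apply: (K_submod _).1.
- move=> s w /J_step; apply: lead_ideal_sub => c; apply: chain_mono.
  exact: (chain _).1.
- move=> s; exists (z (tau s.+1)); first exact: (chain _).2.1.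
  by move=> /J_step; apply: (chain _).2.2.
Qed.

End CoefficientChains.

Lemma FSact_nmod_morphism (V : FSopModZ) a b (f : Surj a b) :
  nmod_morphism (@FSact V a b f).
Proof.
split; last exact: FSact_add.
by apply: (@addrI _ (FSact f 0)); rewrite -FSact_add !addr0.
Qed.

HB.instance Definition _ (V : FSopModZ) a b (f : Surj a b) :=
  GRing.isNmodMorphism.Build (FSobj V b) (FSobj V a) (@FSact V a b f)
    (FSact_nmod_morphism V f).

Lemma In_nth_ord (T : Type) (x0 : T) (s : seq T) x :
  List.In x s -> exists i : 'I_(size s), nth x0 s i = x.
Proof.
elim: s => [|y s IH] //= [->|/IH [i <-]]; first by exists ord0.
by exists (lift ord0 i).
Qed.

Section FreeCover.
Variables (V : FSopModZ) (gens : seq {n : nat & FSobj V n}).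

Let g0 : {n : nat & FSobj V n} := Tagged (FSobj V) (0 : FSobj V 0).

Definition gen_deg (i : 'I_(size gens)) : nat := projT1 (nth g0 gens i).

Definition gen_elt (i : 'I_(size gens)) : FSobj V (gen_deg i) := projT2 (nth g0 gens i).

Local Notation Mon := (Mon gen_deg).

Definition mon_elt n (x : Mon n) : FSobj V n := FSact (tagged x) (gen_elt (tag x)).

Definition coef_eval n (c : {ffun Mon n -> int}) : FSobj V n :=
  \sum_(x : Mon n) mon_elt x *~ c x.

Lemma mon_elt_pull a b (h : Surj a b) (x : Mon b) : mon_elt (mon_pull h x) = FSact h (mon_elt x).
Proof. by apply: FSact_comp => i; apply: Surj_compE. Qed.

Lemma coef_eval_pull a b (h : Surj a b) (c : {ffun Mon b -> int}) :
  coef_eval (coef_pull h c) = FSact h (coef_eval c).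
Proof.
rewrite /coef_eval /coef_pull raddf_sum.
under [RHS]eq_bigr do rewrite raddfMz /= -mon_elt_pull.
rewrite (eq_bigr (fun y => \sum_(x | mon_pull h x == y) mon_elt y *~ c x)); last first.
  by move=> y _; rewrite ffunE mulrz_sumr.
rewrite (exchange_big_dep predT) //=; apply: eq_bigr => x _.
by rewrite (eq_bigl (pred1 (mon_pull h x))) ?big_pred1_eq // => y; rewrite eq_sym.
Qed.

Lemma coef_evalB n (c c' : {ffun Mon n -> int}) : coef_eval (c - c') = coef_eval c - coef_eval c'.
Proof. by rewrite /coef_eval -sumrB; apply: eq_bigr => x _; rewrite !ffunE mulrzBr. Qed.

Lemma coef_eval0 n : coef_eval (0 : {ffun Mon n -> int}) = 0.
Proof. by rewrite /coef_eval big1 // => x _; rewrite ffunE mulr0z. Qed.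

Lemma coef_eval_onto :
  (forall S, is_submodule S -> (forall g, List.In g gens -> S (projT1 g) (projT2 g)) ->
    forall n x, S n x) ->
  forall n (v : FSobj V n), exists c : {ffun Mon n -> int}, coef_eval c = v.
Proof.
apply; first split=> [n|]; first by exists 0; apply: coef_eval0.
  split=> [n _ _ [c <-] [c' <-]|a b h _ [c <-]]; first by exists (c - c'); apply: coef_evalB.
  by exists (coef_pull h c); apply: coef_eval_pull.
move=> g /(In_nth_ord g0) [i <-].
pose x : Mon (gen_deg i) := Tagged (fun j => Surj _ (gen_deg j)) (Surj_id (gen_deg i)).
exists [ffun y => (y == x)%:Z].
rewrite /coef_eval (bigD1 x) //= big1 ?addr0 => [|y /negbTE yx]; last by rewrite ffunE yx mulr0z.
by rewrite ffunE eqxx /mon_elt FSact_id //; apply: Surj_idE.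
Qed.

End FreeCover.

Unset Implicit Arguments.
Theorem mainTheorem8 (V : FSopModZ) (hV : fin_gen V) :
  exists e : nat, (1 <= e)%N /\
    forall (n : nat) (x : FSobj V n), is_torsion x -> x *+ e = 0.
Proof.
have [gens gens_span] := hV.
(* Using t! rather than t makes the K t increase, and lets every m-torsion
   element lift into K m. *)
pose K t n (c : {ffun Mon (@gen_deg V gens) n -> int}) := coef_eval c *+ t`! = 0.
have K_submod t : coef_submod (K t).
  split=> [n|a b h c]; last by rewrite /K coef_eval_pull -raddfMn => ->; rewrite raddf0.
  split=> [|c c']; first by rewrite /K coef_eval0 mul0rn.
  by rewrite /K coef_evalB mulrnBl => -> ->; rewrite subrr.
have K_step t n c : K t n c -> K t.+1 n c.
  by rewrite /K factS mulnC mulrnA => ->; rewrite mul0rn.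
have [t0 K_t0] := coef_chain_stationary K_submod K_step.
exists t0`!; split; first exact: fact_gt0.
move=> n x [[|m] [// _ mx]]; have [c cx] := coef_eval_onto gens_span x.
by have := K_t0 m.+1 n c; rewrite /K cx factS mulrnA mx mul0rn; apply.
Qed.
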